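(* For every integer $n\ge 1$, the polytope $\overline{Q}_n=\sum_{S\in\mathcal{I}_n}\Delta_S\subseteq\mathbb{R}^{n+1}$ is combinatorially equivalent to the $n$-th stellohedron $\mathrm{Stell}_n$.
   Context: Sums are Minkowski sums. $\mathcal{I}_n=\{S\cup\{n+1\}: S\subseteq[n],\ |S|\in\{1,2\}\}$ and, for $S\subseteq[n+1]$, $\Delta_S=\mathrm{conv}\{e_i: i\in S\}\subseteq\mathbb{R}^{n+1}$. Let $\mathrm{st}_n$ be the star graph on $[n+1]$ with edges $\{i,n+1\}$, $i=1,\dots,n$. The stellohedron is the graph associahedron of $\mathrm{st}_n$: $\mathrm{Stell}_n=\sum_{S}\Delta_S$, the sum over all nonempty $S\subseteq[n+1]$ inducing a connected subgraph of $\mathrm{st}_n$ (i.e. $S$ a singleton or $n+1\in S$). Two polytopes are combinatorially equivalent if their face posets (ordered by inclusion) are isomorphic. *)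

From HB Require Import structures.
From mathcomp Require Import all_boot all_order all_algebra.
From mathcomp Require Import reals.
Set Implicit Arguments. Unset Strict Implicit. Unset Printing Implicit Defensive.
Import Order.TTheory GRing.Theory Num.Theory.
Local Open Scope ring_scope.

Section Polytopes.
Variables (R : realType) (d : nat).

Definition pt := 'rV[R]_d.
Definition pset := pt -> Prop.

Definition subset_p (A B : pset) : Prop := forall x, A x -> B x.

Definition evec (i : 'I_d) : pt := \row_(j < d) (if j == i then 1 else 0).

Definition simplex (T : {set 'I_d}) : pset := fun x =>
  exists lam : 'I_d -> R,
    [/\ (forall i, 0 <= lam i), (forall i, i \notin T -> lam i = 0),
        \sum_(i < d) lam i = 1 & x = \sum_(i < d) lam i *: evec i].

Definition msum2 (A B : pset) : pset := fun x =>
  exists a b, [/\ A a, B b & x = a + b].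

Fixpoint msum_seq (l : seq pset) : pset :=
  match l with
  | [::] => fun x => x = 0
  | A :: l' => msum2 A (msum_seq l')
  end.

Definition simplex_sum (F : {set {set 'I_d}}) : pset :=
  msum_seq [seq simplex T | T <- enum F].

Definition dotp (c x : pt) : R := \sum_(i < d) c ord0 i * x ord0 i.

(* Faces of P: the empty set, and the sets of maximizers of a linear
   functional over P (c = 0 gives P itself). *)
Definition is_face (P F : pset) : Prop :=
  (forall x, ~ F x) \/
  exists c : pt, forall x, F x <-> (P x /\ forall y, P y -> dotp c y <= dotp c x).

End Polytopes.

Definition comb_equiv (R : realType) (d1 d2 : nat)
    (P : pset R d1) (Q : pset R d2) : Prop :=
  exists f : pset R d1 -> pset R d2,
    [/\ (forall F, is_face P F -> is_face Q (f F)),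
        (forall G, is_face Q G -> exists2 F, is_face P F & f F = G) &
        (forall F1 F2, is_face P F1 -> is_face P F2 ->
           (subset_p F1 F2 <-> subset_p (f F1) (f F2)))].

(* Index sets, with [n+1] identified with 'I_(n.+1) and n+1 with ord_max. *)
Definition calI (n : nat) : {set {set 'I_(n.+1)}} :=
  [set A :|: [set ord_max] | A in
     [set A : {set 'I_(n.+1)} | (ord_max \notin A) && ((#|A| == 1%N) || (#|A| == 2%N))]].

(* Nonempty S inducing a connected subgraph of the star graph st_n:
   singletons, or sets containing the centre n+1. *)
Definition stell_sets (n : nat) : {set {set 'I_(n.+1)}} :=
  [set A : {set 'I_(n.+1)} | (A != set0) && ((#|A| == 1%N) || (ord_max \in A))].

Definition Qbar (R : realType) (n : nat) : pset R n.+1 := simplex_sum (calI n).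
Definition Stell (R : realType) (n : nat) : pset R n.+1 := simplex_sum (stell_sets n).
Arguments Qbar R n : clear implicits.
Arguments Stell R n : clear implicits.

(* The faces of a Minkowski sum of simplices P = sum_S Delta_S are the empty
   set and the maximizer sets of linear functionals c, and the c-face is
   sum_S Delta_{argmax_S c}.  Comparing values summand by summand at the vertex
   sums shows that the c-face lies in the c'-face iff argmax_S c is contained in
   argmax_S c' for every summand S, so two such sums with the same ambient space
   have isomorphic face posets as soon as these refinement conditions agree.
   For Qbar_n and Stell_n they do: every S in I_n is itself connected, and on a
   connected S containing the centre n+1 an argmax j of c beats any other k of S
   already on the triangle {j, k, n+1}, which lies in I_n; singletons impose no
   condition. *)

From mathcomp Require Import all_boot all_order all_algebra.
From mathcomp Require Import reals.
From Stdlib Require Import FunctionalExtensionality PropExtensionality.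
Set Implicit Arguments. Unset Strict Implicit. Unset Printing Implicit Defensive.
Import Order.TTheory GRing.Theory Num.Theory.
Local Open Scope ring_scope.

Lemma lerD_eq (R : numDomainType) (a a' b b' : R) :
  a <= a' -> b <= b' -> a + b = a' + b' -> a = a' /\ b = b'.
Proof.
move=> le_a le_b eq_ab; have eq_a : a = a'.
  by apply/le_anti; rewrite le_a -(lerD2r b) eq_ab lerD2l.
by split=> //; move: eq_ab; rewrite eq_a => /addrI.
Qed.

Lemma ler_sum_eq (R : numDomainType) (I : eqType) (r : seq I) (F G : I -> R) :
  {in r, forall i, F i <= G i} -> \sum_(i <- r) F i = \sum_(i <- r) G i ->
  {in r, F =1 G}.
Proof.
elim: r => [|i r IHr] leFG; first by [].
have leFG_r : {in r, forall j, F j <= G j}.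
  by move=> j rj; rewrite leFG // inE rj orbT.
rewrite !big_cons => /lerD_eq[]; first by rewrite leFG ?mem_head.
  by rewrite big_seq [leRHS]big_seq ler_sum.
move=> eq_i /IHr-/(_ leFG_r) eq_r j; rewrite inE => /predU1P[-> //|]; exact: eq_r.
Qed.

Section MinkowskiSumOfSimplices.
Variables (R : realType) (d : nat).
Implicit Types (c x y a : pt R d) (A B T U : {set 'I_d}) (s : seq {set 'I_d}).

Definition argmaxes c T : {set 'I_d} :=
  [set i in T | [forall j in T, c ord0 j <= c ord0 i]].

Definition msimplex s : pset R d := msum_seq [seq simplex T | T <- s].

Definition maximizers (P : pset R d) c : pset R d :=
  fun x => P x /\ forall y, P y -> dotp c y <= dotp c x.

Lemma argmaxesP c T i :
  reflect (i \in T /\ forall j, j \in T -> c ord0 j <= c ord0 i) (i \in argmaxes c T).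
Proof. by rewrite inE; apply: (iffP andP) => -[iT /forall_inP]. Qed.

Lemma argmaxes_sub c T : argmaxes c T \subset T.
Proof. by apply/subsetP => i /argmaxesP[]. Qed.

Lemma argmaxes_eq c T i j :
  i \in argmaxes c T -> j \in argmaxes c T -> c ord0 j = c ord0 i.
Proof.
by move=> /argmaxesP[iT maxi] /argmaxesP[jT maxj]; apply/le_anti; rewrite maxi ?maxj.
Qed.

Lemma argmaxes_ge c T i j :
  i \in argmaxes c T -> j \in T -> c ord0 i <= c ord0 j -> j \in argmaxes c T.
Proof.
case/argmaxesP=> _ maxi jT le_ij; apply/argmaxesP; split=> // k kT.
exact: le_trans (maxi k kT) le_ij.
Qed.

Lemma argmaxes1 c i : argmaxes c [set i] = [set i].
Proof.
apply/setP => k; rewrite !inE; apply/andb_idr => /eqP->.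
by apply/forall_inP => j; rewrite inE => /eqP->.
Qed.

Lemma argmaxes_restrict c T U i :
  U \subset T -> i \in U -> i \in argmaxes c T -> i \in argmaxes c U.
Proof.
move=> UT iU /argmaxesP[_ maxi]; apply/argmaxesP; split=> // j jU.
by rewrite maxi // (subsetP UT).
Qed.

(* [i0] only witnesses that ['I_d] is inhabited: it is the junk value of [g]
   outside [s]. *)
Lemma argmax_selection (i0 : 'I_d) c s : all (fun T => T != set0) s ->
  exists g : {set 'I_d} -> 'I_d, all (fun T => g T \in argmaxes c T) s.
Proof.
move=> /allP s_neq0; exists (fun T => odflt i0 [pick i in argmaxes c T]).
apply/allP => T /s_neq0.
case/set0Pn=> j jT; case: pickP => //= none.
have [i iT maxi] := arg_maxP (fun i => c ord0 i) jT.
have : i \in argmaxes c T by apply/argmaxesP.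
by have /= -> := none i.
Qed.

Lemma dotpD c : {morph dotp c : a b / a + b}.
Proof.
by move=> a b; rewrite /dotp -big_split; apply: eq_bigr => i _; rewrite mxE mulrDr.
Qed.

Lemma dotp0 c : dotp c 0 = 0.
Proof. by rewrite /dotp big1 // => i _; rewrite mxE mulr0. Qed.

Lemma dotpZ c (r : R) a : dotp c (r *: a) = r * dotp c a.
Proof. by rewrite /dotp mulr_sumr; apply: eq_bigr => i _; rewrite mxE mulrCA. Qed.

Lemma dotp_evec c i : dotp c (evec R i) = c ord0 i.
Proof.
rewrite /dotp (bigD1 i) //= !mxE eqxx mulr1 big1 ?addr0 // => j /negbTE ji.
by rewrite !mxE ji mulr0.
Qed.

Lemma dotp_comb c (lam : 'I_d -> R) :
  dotp c (\sum_k lam k *: evec R k) = \sum_k lam k * c ord0 k.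
Proof.
rewrite (big_morph _ (dotpD c) (dotp0 c)); apply: eq_bigr => k _.
by rewrite dotpZ dotp_evec.
Qed.

Lemma simplex_evec T i : i \in T -> simplex T (evec R i).
Proof.
move=> iT; exists (fun j => (j == i)%:R); split.
- by move=> j; rewrite ler0n.
- by move=> j; apply: contraNeq; rewrite pnatr_eq0 eqb0 negbK => /eqP->.
- by rewrite (bigD1 i) //= eqxx big1 ?addr0 // => j /negbTE->.
- apply/rowP => k; rewrite summxE (bigD1 k) //= !mxE eqxx mulr1 big1 ?addr0.
    by case: (k == i).
  by move=> j /negbTE jk; rewrite !mxE [k == j]eq_sym jk mulr0.
Qed.

Lemma simplex_subset A B : A \subset B -> subset_p (simplex (R:=R) A) (simplex B).
Proof.
move=> AB x [lam [lam_ge0 lam_out lam1 ->]]; exists lam; split=> // k kB.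
by apply: lam_out; apply: contra kB; apply: (subsetP AB).
Qed.

Lemma dotp_comb_gap c (lam : 'I_d -> R) v : \sum_k lam k = 1 ->
  v - dotp c (\sum_k lam k *: evec R k) = \sum_k lam k * (v - c ord0 k).
Proof.
move=> lam1; rewrite dotp_comb -[v in v - _]mul1r -lam1 mulr_suml -sumrB.
by apply: eq_bigr => k _; rewrite mulrBr.
Qed.

Lemma argmax_gap_ge0 c T i (lam : 'I_d -> R) : i \in argmaxes c T ->
  (forall k, 0 <= lam k) -> (forall k, k \notin T -> lam k = 0) ->
  forall k, 0 <= lam k * (c ord0 i - c ord0 k).
Proof.
case/argmaxesP=> _ maxi lam_ge0 lam_out k.
have [kT|kT] := boolP (k \in T); last by rewrite lam_out ?mul0r.
by rewrite mulr_ge0 // subr_ge0 maxi.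
Qed.

Lemma simplex_dotp_le c T i a :
  i \in argmaxes c T -> simplex T a -> dotp c a <= c ord0 i.
Proof.
move=> maxi [lam [lam_ge0 lam_out lam1 ->]].
rewrite -subr_ge0 dotp_comb_gap // sumr_ge0 // => k _.
exact: argmax_gap_ge0 maxi lam_ge0 lam_out k.
Qed.

Lemma simplex_argmaxes c T i a : i \in argmaxes c T ->
  simplex T a /\ dotp c a = c ord0 i <-> simplex (argmaxes c T) a.
Proof.
move=> maxi; split=> [[[lam [lam_ge0 lam_out lam1 ->]] dot_a]|].
  exists lam; split=> // k; apply: contraNeq => lamk_neq0.
  have gap0 : \sum_k lam k * (c ord0 i - c ord0 k) = 0.
    by rewrite -dotp_comb_gap // dot_a subrr.
  have /(_ k isT)/eqP :=
    psumr_eq0P (fun k _ => argmax_gap_ge0 maxi lam_ge0 lam_out k) gap0.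
  rewrite mulf_eq0 (negbTE lamk_neq0) subr_eq0 => /eqP eq_ik.
  have kT : k \in T by apply: contraNT lamk_neq0 => /lam_out->.
  by apply: argmaxes_ge maxi kT _; rewrite eq_ik.
move=> a_max; split; first exact: simplex_subset (argmaxes_sub c T) _ a_max.
case: a_max => lam [lam_ge0 lam_out lam1 ->]; apply/eqP; rewrite eq_sym -subr_eq0.
rewrite dotp_comb_gap // big1 // => k _.
have [kmax|kmax] := boolP (k \in argmaxes c T); last by rewrite lam_out ?mul0r.
by rewrite (argmaxes_eq maxi kmax) subrr mulr0.
Qed.

Lemma dotp_sum_evec c s (g : {set 'I_d} -> 'I_d) :
  dotp c (\sum_(T <- s) evec R (g T)) = \sum_(T <- s) c ord0 (g T).
Proof.
rewrite (big_morph _ (dotpD c) (dotp0 c)); apply: eq_bigr => T _; exact: dotp_evec.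
Qed.

Lemma msimplex_vertex_sum s (g : {set 'I_d} -> 'I_d) :
  all (fun T => g T \in T) s -> msimplex s (\sum_(T <- s) evec R (g T)).
Proof.
elim: s => [|T s IHs] /=; first by rewrite big_nil.
case/andP=> gT gs; rewrite big_cons.
exists (evec R (g T)), (\sum_(U <- s) evec R (g U)).
by split; [exact: simplex_evec | exact: IHs |].
Qed.

Lemma msimplex_subset s (f f' : {set 'I_d} -> {set 'I_d}) :
  all (fun T => f T \subset f' T) s ->
  subset_p (msimplex [seq f T | T <- s]) (msimplex [seq f' T | T <- s]).
Proof.
elim: s => [|T s IHs] /=; first by move=> _ x.
move=> /andP[fT fs] x [a [b [a_f b_f ->]]].
by exists a, b; split; [exact: simplex_subset fT _ a_f | exact: IHs |].
Qed.

Section Selection.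
Variables (c : pt R d) (g : {set 'I_d} -> 'I_d).

Lemma selection_in s :
  all (fun T => g T \in argmaxes c T) s -> all (fun T => g T \in T) s.
Proof. by apply: sub_all => T; apply: (subsetP (argmaxes_sub c T)). Qed.

Lemma msimplex_dotp_le s x : all (fun T => g T \in argmaxes c T) s ->
  msimplex s x -> dotp c x <= \sum_(T <- s) c ord0 (g T).
Proof.
elim: s x => [|T s IHs] x /=; first by move=> _ ->; rewrite dotp0 big_nil.
case/andP=> gT gs [a [b [a_T b_s ->]]]; rewrite dotpD big_cons.
by rewrite lerD ?IHs //; exact: simplex_dotp_le gT a_T.
Qed.

Lemma msimplex_face s x : all (fun T => g T \in argmaxes c T) s ->
  msimplex s x /\ dotp c x = \sum_(T <- s) c ord0 (g T) <->
  msimplex [seq argmaxes c T | T <- s] x.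
Proof.
elim: s x => [|T s IHs] x /=.
  by move=> _; split=> [[] //|->]; rewrite dotp0 big_nil.
case/andP=> gT gs; split.
  case=> -[a [b [a_T b_s ->]]]; rewrite dotpD big_cons.
  case/lerD_eq; [exact: simplex_dotp_le gT a_T | exact: msimplex_dotp_le |].
  move=> dot_a dot_b; exists a, b; split=> //.
    by apply/(simplex_argmaxes _ gT).
  by apply/IHs.
case=> a [b [a_max b_max ->]].
have [a_T dot_a] := (simplex_argmaxes _ gT).2 a_max.
have [b_s dot_b] := (IHs b gs).2 b_max.
by split; [exists a, b | rewrite dotpD big_cons dot_a dot_b].
Qed.

Lemma maximizers_msimplexE s x : all (fun T => g T \in argmaxes c T) s ->
  maximizers (msimplex s) c x <->
  msimplex s x /\ dotp c x = \sum_(T <- s) c ord0 (g T).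
Proof.
move=> gs; split=> [[x_s x_max]|[x_s dot_x]]; last first.
  by split=> // y y_s; rewrite dot_x msimplex_dotp_le.
split=> //; apply/le_anti; rewrite msimplex_dotp_le //=.
by rewrite -dotp_sum_evec; apply: x_max; exact: msimplex_vertex_sum (selection_in gs).
Qed.

Lemma vertex_sum_maximizer s : all (fun T => g T \in argmaxes c T) s ->
  maximizers (msimplex s) c (\sum_(T <- s) evec R (g T)).
Proof.
move=> gs; apply/(maximizers_msimplexE _ gs); split; last exact: dotp_sum_evec.
exact: msimplex_vertex_sum (selection_in gs).
Qed.

End Selection.

Lemma maximizers_msimplex_exists (i0 : 'I_d) c s :
  all (fun T => T != set0) s -> exists x, maximizers (msimplex s) c x.
Proof.
case/(argmax_selection i0 c) => g gs.
by exists (\sum_(T <- s) evec R (g T)); exact: vertex_sum_maximizer.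
Qed.

Lemma maximizers_msimplex_subset (i0 : 'I_d) c c' s : all (fun T => T != set0) s ->
  subset_p (maximizers (msimplex s) c) (maximizers (msimplex s) c') <->
  all (fun T => argmaxes c T \subset argmaxes c' T) s.
Proof.
move=> s_neq0; have [g gs] := argmax_selection i0 c s_neq0.
have [g' gs'] := argmax_selection i0 c' s_neq0.
split=> [sub_max | sub_arg x]; last first.
  move=> /(maximizers_msimplexE _ gs)/(msimplex_face _ gs)/(msimplex_subset sub_arg).
  by move=> /(msimplex_face _ gs')/(maximizers_msimplexE _ gs').
(* The vertex sum choosing j in T0 is a c-maximizer, hence a c'-maximizer; its
   c'-value is a sum of terms bounded by the c'-maxima, so all are attained. *)
apply/allP => T0 sT0; apply/subsetP => j j_max.
pose h T := if T == T0 then j else g T.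
have hs : all (fun T => h T \in argmaxes c T) s.
  by apply/allP => T sT; rewrite /h; case: eqP => [->|_] //; exact: (allP gs).
have le_hg' : {in s, forall T, c' ord0 (h T) <= c' ord0 (g' T)}.
  move=> T sT; have /argmaxesP[_ ->] // := allP gs' T sT.
  exact: (allP (selection_in hs)).
have /sub_max/(maximizers_msimplexE _ gs')[_] := vertex_sum_maximizer hs.
rewrite dotp_sum_evec => /(ler_sum_eq le_hg')/(_ T0 sT0); rewrite /h eqxx => eq_j.
apply: argmaxes_ge (allP gs' T0 sT0) _ _; last by rewrite eq_j.
exact: (subsetP (argmaxes_sub c T0)).
Qed.
End MinkowskiSumOfSimplices.

Section FaceLattice.
Variables (R : realType) (d : nat).
Implicit Types (P Q F G : pset R d) (c : pt R d).

Definition pset0 : pset R d := fun _ => False.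

Lemma pset_ext F G : (forall x, F x <-> G x) -> F = G.
Proof.
by move=> FG; apply: functional_extensionality => x; apply: propositional_extensionality.
Qed.

Lemma is_faceP P F : is_face P F -> F = pset0 \/ exists c, F = maximizers P c.
Proof.
case=> [F0|[c Fc]]; [left | right; exists c]; apply: pset_ext => // x.
by split=> // /F0.
Qed.

Lemma is_face0 P : is_face P pset0.
Proof. by rewrite /is_face; left=> x []. Qed.

Lemma is_face_maximizers P c : is_face P (maximizers P c).
Proof. by rewrite /is_face; right; exists c. Qed.

Lemma comb_equiv_maximizers P Q :
  (forall c, exists x, maximizers P c x) -> (forall c, exists y, maximizers Q c y) ->
  (forall c c', subset_p (maximizers P c) (maximizers P c') <->
                subset_p (maximizers Q c) (maximizers Q c')) ->
  comb_equiv P Q.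
Proof.
move=> P_neq0 Q_neq0 PQ.
pose f F : pset R d := fun y => exists c, F = maximizers P c /\ maximizers Q c y.
have f_max c : f (maximizers P c) = maximizers Q c.
  apply: pset_ext => y; split=> [[c0 [eq_c Q_c0_y]]|]; last by exists c.
  by apply: (PQ c0 c).1 y Q_c0_y; rewrite eq_c.
have f0 : f pset0 = pset0.
  apply: pset_ext => y; split=> // -[c [eq_c _]].
  by have [x] := P_neq0 c; rewrite -eq_c.
exists f; split.
- move=> F /is_faceP[->|[c ->]].
    by rewrite f0; exact: is_face0.
  by rewrite f_max; exact: is_face_maximizers.
- move=> G /is_faceP[->|[c ->]].
    by exists pset0; [exact: is_face0 | rewrite f0].
  by exists (maximizers P c); [exact: is_face_maximizers | rewrite f_max].
- move=> F1 F2 /is_faceP[->|[c1 ->]] /is_faceP[->|[c2 ->]]; rewrite ?f0 ?f_max.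
  + by [].
  + by split=> _ x [].
  + have [x P_x] := P_neq0 c1; have [y Q_y] := Q_neq0 c1.
    by split=> [/(_ x P_x) | /(_ y Q_y)].
  + exact: PQ.
Qed.

End FaceLattice.

Section StarGraph.
Variable n : nat.
Implicit Types T : {set 'I_n.+1}.

Lemma calI_ord_max T : T \in calI n -> ord_max \in T.
Proof. by case/imsetP=> A _ ->; rewrite !inE eqxx orbT. Qed.

Lemma calI_sub_stell_sets : calI n \subset stell_sets n.
Proof.
apply/subsetP => T /calI_ord_max NT; rewrite inE NT orbT andbT.
by apply/set0Pn; exists ord_max.
Qed.

Lemma calI_triangle (j k : 'I_n.+1) : j != k -> [set j; k; ord_max] \in calI n.
Proof.
move=> jk; apply/imsetP; exists ([set j; k] :\ ord_max).
  rewrite inE setD11 /=; move: (cardsD1 ord_max [set j; k]); rewrite cards2 jk.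
  by case: (_ \in _); rewrite ?add1n ?add0n; [case=> <- | move=> <-].
by apply/setP => x; rewrite !inE; case: (x == ord_max); rewrite ?orbT ?andbT.
Qed.

End StarGraph.

Lemma argmaxes_refine_calI_stell_sets (R : realType) n (c c' : pt R n.+1) :
  all (fun T => argmaxes c T \subset argmaxes c' T) (enum (calI n)) =
  all (fun T => argmaxes c T \subset argmaxes c' T) (enum (stell_sets n)).
Proof.
apply/allP/allP => sub T; rewrite mem_enum => T_in; last first.
  by apply: sub; rewrite mem_enum (subsetP (calI_sub_stell_sets n)).
move: T_in; rewrite inE => /andP[_ /orP[/cards1P[i ->]|NT]].
  by rewrite !argmaxes1.
apply/subsetP => j j_max; have jT := subsetP (argmaxes_sub c T) j j_max.
apply/argmaxesP; split=> // k kT; have [-> //|jk] := eqVneq j k.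
have tri_T : [set j; k; ord_max] \subset T.
  by apply/subsetP => x; rewrite !inE => /orP[/orP[]|] /eqP->.
have j_tri : j \in argmaxes c [set j; k; ord_max].
  by apply: argmaxes_restrict tri_T _ j_max; rewrite !inE eqxx.
have tri_calI : [set j; k; ord_max] \in enum (calI n).
  by rewrite mem_enum calI_triangle.
have /sub/subsetP/(_ j j_tri)/argmaxesP[_ ->] // := tri_calI.
by rewrite !inE eqxx orbT.
Qed.

Theorem mainTheorem13 (R : realType) (n : nat) (hn : (1 <= n)%N) :
  comb_equiv (Qbar R n) (Stell R n).
Proof.
have stell_neq0 : all (fun T => T != set0) (enum (stell_sets n)).
  by apply/allP => T; rewrite mem_enum inE => /andP[].
have calI_neq0 : all (fun T => T != set0) (enum (calI n)).
  apply/allP => T; rewrite mem_enum => /(subsetP (calI_sub_stell_sets n)) T_in.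
  by apply: (allP stell_neq0); rewrite mem_enum.
apply: comb_equiv_maximizers => [c|c|c c'].
- exact: maximizers_msimplex_exists ord0 c _ calI_neq0.
- exact: maximizers_msimplex_exists ord0 c _ stell_neq0.
- rewrite (maximizers_msimplex_subset ord0 c c' calI_neq0).
  rewrite (maximizers_msimplex_subset ord0 c c' stell_neq0).
  by rewrite argmaxes_refine_calI_stell_sets.
Qed.
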